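(* Let $(R_0,R_1,s,t,i,\circ)$ be a strict $2$-rack. Put $R:=R_1$ and $N:=i(R_0)\subset R_1$, and consider the maps $i\circ s,\ i\circ t:R\to N$. Then $N$ is a subrack of $R$, $i\circ s$ and $i\circ t$ are rack morphisms whose restrictions to $N$ are the identity of $N$, and $\ker(s)$ and $\ker(t)$ act trivially on each other (i.e. $f\lhd g=f$ and $g\lhd f=g$ for $f\in\ker(t)$, $g\in\ker(s)$). Thus $(R,N,i\circ s,i\circ t)$ is a 1-cat rack.
   Context: A (right) rack is a set with a binary operation $\lhd$ such that each $x\mapsto x\lhd y$ is bijective and $(x\lhd y)\lhd z=(x\lhd z)\lhd(y\lhd z)$; it is pointed if it has an element $1$ with $1\lhd x=1$ and $x\lhd 1=x$ for all $x$. A strict $2$-rack is a category object in racks: pointed racks $R_0$, $R_1$ with morphisms of pointed racks $s,t:R_1\to R_0$, $i:R_0\to R_1$ and a composition $\circ:R_1\times_{R_0}R_1\to R_1$ (on pairs $(g,f)$ with $s(g)=t(f)$) that is a rack morphism for the componentwise rack structure, satisfying the category axioms ($s\circ i=t\circ i=\mathrm{id}$, associativity, identities). $\ker(s)=s^{-1}(1)$, $\ker(t)=t^{-1}(1)$. A 1-cat rack consists of a pointed rack $R$, a subrack $N$ and two rack morphisms $s',t':R\to N$ with $s'|_N=t'|_N=\mathrm{id}_N$ such that $\ker(s')$ and $\ker(t')$ act trivially on each other. *)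

From mathcomp Require Import ssreflect ssrfun ssrbool.

Set Implicit Arguments.
Unset Strict Implicit.

Record pointedRack := PointedRack {
  car :> Type;
  rop : car -> car -> car;
  one : car;
  rop_bij : forall y, bijective (fun x => rop x y);
  rop_dist : forall x y z, rop (rop x y) z = rop (rop x z) (rop y z);
  one_rop : forall x, rop one x = one;
  rop_one : forall x, rop x one = x
}.

Arguments one {_}.
Notation "x <| y" := (rop x y) (at level 40, left associativity).

Definition rack_morphism (A B : pointedRack) (f : A -> B) : Prop :=
  forall x y, f (x <| y) = f x <| f y.

Definition pointed_rack_morphism (A B : pointedRack) (f : A -> B) : Prop :=
  rack_morphism f /\ f one = one.

(* A subrack: a subset closed under <| on which each right translation is still
   bijective (injectivity is inherited, so we require closure and surjectivity). *)
Definition subrack (A : pointedRack) (N : A -> Prop) : Prop :=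
  (forall x y, N x -> N y -> N (x <| y)) /\
  (forall x y, N x -> N y -> exists z, N z /\ z <| y = x).

(* The composition
   (g, f) |-> g o f is defined on the pullback R1 x_{R0} R1 = {(g,f) | s g = t f};
   it is encoded as a total function [comp g f] whose values are only constrained
   on composable pairs. The componentwise rack structure on the pullback is
   (g,f) <| (g',f') = (g <| g', f <| f'). *)
Record strict2Rack := Strict2Rack {
  R0 : pointedRack;
  R1 : pointedRack;
  src : R1 -> R0;
  tgt : R1 -> R0;
  idm : R0 -> R1;
  comp : R1 -> R1 -> R1;
  src_morph : pointed_rack_morphism src;
  tgt_morph : pointed_rack_morphism tgt;
  idm_morph : pointed_rack_morphism idm;
  comp_morph : forall g f g' f', src g = tgt f -> src g' = tgt f' ->
      comp (g <| g') (f <| f') = comp g f <| comp g' f';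
  src_idm : forall a, src (idm a) = a;
  tgt_idm : forall a, tgt (idm a) = a;
  src_comp : forall g f, src g = tgt f -> src (comp g f) = src f;
  tgt_comp : forall g f, src g = tgt f -> tgt (comp g f) = tgt g;
  comp_assoc : forall h g f, src h = tgt g -> src g = tgt f ->
      comp h (comp g f) = comp (comp h g) f;
  comp_id_r : forall f, comp f (idm (src f)) = f;
  comp_id_l : forall f, comp (idm (tgt f)) f = f
}.

Definition rker (A B : pointedRack) (f : A -> B) : A -> Prop := fun x => f x = one.

(* Maps into N are encoded as maps R -> R with image in N. *)
Definition one_cat_rack (R : pointedRack) (N : R -> Prop) (s' t' : R -> R) : Prop :=
  subrack N /\
  (forall x, N (s' x)) /\ (forall x, N (t' x)) /\
  rack_morphism s' /\ rack_morphism t' /\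
  (forall x, N x -> s' x = x) /\ (forall x, N x -> t' x = x) /\
  (forall f g, rker t' f -> rker s' g -> f <| g = f /\ g <| f = g).

From Pilot Require Import Defs.
From mathcomp Require Import ssreflect ssrfun ssrbool.

(* Everything is formal except the trivial mutual action of the kernels, which
   is an interchange argument: for [f] with [t f = 1] and [g] with [s g = 1] the pairs
   [(1, f)] and [(g, 1)] are composable, with [1 o f = f] and [g o 1 = g]; since
   composition is a rack morphism on composable pairs,
   [f <| g = (1 o f) <| (g o 1) = (1 <| g) o (f <| 1) = 1 o f = f],
   and symmetrically [g <| f = g]. *)

Lemma rack_morphism_comp (A B C : pointedRack) (f : A -> B) (g : B -> C) :
  rack_morphism f -> rack_morphism g -> rack_morphism (g \o f).
Proof. by move=> fM gM x y /=; rewrite fM gM. Qed.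

Lemma subrack_image (A B : pointedRack) (f : A -> B) :
  rack_morphism f -> subrack (fun y => exists a, y = f a).
Proof.
move=> fM; split=> _ _ [a ->] [b ->].
  by exists (a <| b); rewrite fM.
have [h _ hK] := rop_bij b.
by exists (f (h a)); split; [exists (h a) | rewrite -fM hK].
Qed.

Section Strict2Rack.

Variable X : strict2Rack.

Local Notation s := (@src X).
Local Notation t := (@tgt X).
Local Notation i := (@idm X).
Local Notation "g \o* f" := (@Defs.comp X g f) (at level 50).

Lemma src_one : s one = one. Proof. by case: (src_morph X). Qed.
Lemma tgt_one : t one = one. Proof. by case: (tgt_morph X). Qed.
Lemma idm_one : i one = one. Proof. by case: (idm_morph X). Qed.

Lemma idm_inj : injective i.
Proof. by move=> a b /(congr1 s); rewrite !src_idm. Qed.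

Lemma idm_eq_one a : i a = one -> a = one.
Proof. by rewrite -idm_one => /idm_inj. Qed.

Lemma comp_one_l f : t f = one -> one \o* f = f.
Proof. by move=> tf; rewrite -[in LHS]idm_one -tf comp_id_l. Qed.

Lemma comp_one_r g : s g = one -> g \o* one = g.
Proof. by move=> sg; rewrite -[in LHS]idm_one -sg comp_id_r. Qed.

Lemma ker_tgt_ker_src_interchange f g : t f = one -> s g = one ->
  f <| g = f /\ g <| f = g.
Proof.
move=> tf sg; split.
- have := @comp_morph X one f g one.
  rewrite src_one tf sg tgt_one => /(_ erefl erefl).
  by rewrite one_rop rop_one !comp_one_l ?comp_one_r.
- have := @comp_morph X g one one f.
  rewrite src_one tf sg tgt_one => /(_ erefl erefl).
  by rewrite one_rop rop_one comp_one_l ?comp_one_r.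
Qed.

End Strict2Rack.

Theorem mainTheorem4 (X : strict2Rack) :
  one_cat_rack (fun x : R1 X => exists a : R0 X, x = idm a)
    (fun x => idm (src x)) (fun x => idm (tgt x)).
Proof.
have [sM _] := src_morph X.
have [tM _] := tgt_morph X.
have [iM _] := idm_morph X.
split; first exact: subrack_image.
split; first by move=> x; exists (src x).
split; first by move=> x; exists (tgt x).
split; first exact: rack_morphism_comp.
split; first exact: rack_morphism_comp.
split; first by move=> _ [a ->]; rewrite src_idm.
split; first by move=> _ [a ->]; rewrite tgt_idm.
by move=> f g /idm_eq_one tf /idm_eq_one sg; apply: ker_tgt_ker_src_interchange.
Qed.
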